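(* Let $n\ge3$, let $S_n$ act on $V=\mathbb{C}^n$ by permutations, fix $a,b\in\mathbb{C}$, let $x$ be a $5$-cycle and $y$ a $3$-cycle, and let $\phi_{x,y}$ be the corresponding summand of the $(xy)$-component of $\phi(\kappa^C_{\mathrm{penta}},\kappa^L_{\mathrm{tri}})$. For basis vectors $e_i,e_j,e_k$: (1) if $e_i,e_j\in V^y$, then $\phi_{x,y}(e_i,e_j,e_k)=0$; (2) if $e_i\in V^y\cap V^x$, then $\phi_{x,y}(e_i,e_j,e_k)=0$; (3) if $e_i\in V^y\setminus V^x$ and $e_j\notin V^y$, then $\phi_{x,y}(e_i,e_j,ye_j)=2(a-b)^3\big[\delta_y(xe_i)-2\delta_y(x^2e_i)+2\delta_y(x^{-2}e_i)-\delta_y(x^{-1}e_i)\big]$; (4) if $e_i\notin V^y$, then $\phi_{x,y}(e_i,ye_i,y^2e_i)=0$.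
   Context: $S_n$ acts by $\sigma e_i=e_{\sigma(i)}$; $V^g$ is the fixed space of $g$; $\delta_y(v)=1$ if $v\in V^y$ and $0$ otherwise. $\kappa^L_{\mathrm{tri}}$ is the linear 2-cochain supported on 3-cycles with $\kappa^L_{(ijk)}(e_i,e_j)=\kappa^L_{(ijk)}(e_j,e_k)=\kappa^L_{(ijk)}(e_k,e_i)=a(e_i+e_j+e_k)+b\sum_{l\notin\{i,j,k\}}e_l$ and $\kappa^L_{(ijk)}(e_l,e_m)=0$ whenever $e_l$ or $e_m$ lies in $V^{(ijk)}$. $\kappa^C_{\mathrm{penta}}$ is the constant 2-cochain with $\kappa^C_g=0$ unless $g$ is a 5-cycle, and for a 5-cycle $g$, $\kappa^C_g(e_i,e_j)=(a-b)^2([g]_{ij}-[g]_{ji}-2[g^2]_{ij}+2[g^2]_{ji})$, where $[h]_{ij}=1$ if $i=h(j)$ and $0$ otherwise. For $\alpha$ constant and $\beta$ linear, $\phi(\alpha,\beta)_g=\sum_{xy=g}\phi_{x,y}$ with $\phi_{x,y}(v_1,v_2,v_3)=\alpha_x(v_1+yv_1,\beta_y(v_2,v_3))+\alpha_x(v_2+yv_2,\beta_y(v_3,v_1))+\alpha_x(v_3+yv_3,\beta_y(v_1,v_2))$; here $\alpha=\kappa^C_{\mathrm{penta}}$, $\beta=\kappa^L_{\mathrm{tri}}$. *)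

From mathcomp Require Import all_boot all_order all_fingroup all_algebra.
Set Implicit Arguments. Unset Strict Implicit. Unset Printing Implicit Defensive.
Import GRing.Theory.
Local Open Scope ring_scope.

Section Cochains.
Variables (C : numClosedFieldType) (n : nat).

Definition V := 'rV[C]_n.
Definition e (i : 'I_n) : V := delta_mx 0 i.

(* sigma e_i = e_{sigma i}, extended linearly *)
Definition pact (s : 'S_n) (v : V) : V := \row_m v 0 (s^-1 m)%g.

Definition fixed_space (g : 'S_n) : pred V := fun v => pact g v == v.

Definition delta (y : 'S_n) (v : V) : C := if v \in fixed_space y then 1 else 0.

Definition is_kcycle (k : nat) (g : 'S_n) : bool :=
  [exists i, (#|porbit g i| == k) && [forall j, (j \notin porbit g i) ==> (g j == j)]].

Definition brk (h : 'S_n) (i j : 'I_n) : C := if i == h j then 1 else 0.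

Variables (a b : C).

Definition kL_basis (g : 'S_n) (l m : 'I_n) : V :=
  let c : V := \row_p (if g p != p then a else b) in
  if is_kcycle 3 g && (g l != l) && (g m != m) then
    (if m == g l then c else if l == g m then - c else 0)
  else 0.

Definition kL (g : 'S_n) (u v : V) : V :=
  \sum_(l < n) \sum_(m < n) (u 0 l * v 0 m) *: kL_basis g l m.

Definition kC_basis (g : 'S_n) (l m : 'I_n) : C :=
  if is_kcycle 5 g then
    (a - b) ^+ 2 * (brk g l m - brk g m l - 2 * brk (g * g)%g l m + 2 * brk (g * g)%g m l)
  else 0.

Definition kC (g : 'S_n) (u v : V) : C :=
  \sum_(l < n) \sum_(m < n) (u 0 l * v 0 m) * kC_basis g l m.

Definition phi_xy (x y : 'S_n) (v1 v2 v3 : V) : C :=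
  kC x (v1 + pact y v1) (kL y v2 v3)
  + kC x (v2 + pact y v2) (kL y v3 v1)
  + kC x (v3 + pact y v3) (kL y v1 v2).

End Cochains.

From mathcomp Require Import all_boot all_order all_fingroup all_algebra.
From mathcomp Require Import ring.
Set Implicit Arguments. Unset Strict Implicit. Unset Printing Implicit Defensive.
Import GRing.Theory Num.Theory.
Local Open Scope ring_scope.

(* In (1)
   and (2) each kappa^L factor, or the row of kappa^C at e_i, vanishes because
   a basis vector is fixed. In (3) only 2 kappa^C_x(e_i, c) survives, where
   c = kappa^L_y(e_j, y e_j) equals a on the support of y and b off it; the row
   of kappa^C_x at e_i samples c at x^{+-1} i and x^{+-2} i with coefficients
   summing to zero, so only the (a - b) delta_y part remains. In (4) all three
   kappa^L values equal c, so phi = 2 kappa^C_x(s, c) with s the indicator of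
   the support of y; as c = b 1 + (a - b) s, this vanishes because kappa^C_x is
   alternating with zero row sums. *)

Section Basis.
Variables (C : numClosedFieldType) (n : nat).
Implicit Types (i j l m p : 'I_n) (s : 'S_n).

Lemma e_coord i k : e C i 0 k = (k == i)%:R.
Proof. by rewrite mxE eqxx. Qed.

Lemma sum_e_coordl (F : 'I_n -> C) l : \sum_m e C l 0 m * F m = F l.
Proof.
under eq_bigr do rewrite e_coord mulr_natl mulrb.
by rewrite -big_mkcond big_pred1_eq.
Qed.

Lemma sum_e_coordZ (G : 'I_n -> V C n) l : \sum_m e C l 0 m *: G m = G l.
Proof.
under eq_bigr do rewrite e_coord scaler_nat mulrb.
by rewrite -big_mkcond big_pred1_eq.
Qed.

Lemma pact_e s i : pact s (e C i) = e C (s i).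
Proof.
by apply/rowP => k; rewrite mxE !e_coord -(inj_eq (@perm_inj _ s)) permKV.
Qed.

Lemma e_inj : injective (@e C n).
Proof.
move=> i j /matrixP/(_ 0 j); rewrite !e_coord eqxx.
by case: eqP => // _ /eqP; rewrite eq_sym oner_eq0.
Qed.

Lemma fixed_space_e s i : (e C i \in fixed_space s) = (s i == i).
Proof. by rewrite unfold_in /fixed_space pact_e (inj_eq e_inj). Qed.

Lemma delta_e s i : delta s (e C i) = (s i == i)%:R.
Proof. by rewrite /delta fixed_space_e; case: eqP. Qed.

Lemma sum_e_uniq (r : seq 'I_n) : uniq r -> \sum_(q <- r) e C q = \row_p (p \in r)%:R.
Proof.
elim: r => [_|q r IHr]; first by rewrite big_nil; apply/rowP => p; rewrite !mxE.
case/andP=> qr /IHr IH; rewrite big_cons {}IH; apply/rowP => p.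
rewrite !mxE inE /=; case: eqP => [->|_]; last by rewrite add0r.
by rewrite (negbTE qr) addr0.
Qed.

End Basis.

Definition support_vec (C : numClosedFieldType) n (s : 'S_n) : V C n :=
  \row_p (s p != p)%:R.

Section KCycles.
Variables (n k : nat) (y : 'S_n) (i : 'I_n).
Hypotheses (hy : is_kcycle k y) (hi : y i != i).

Lemma porbit_kcycle : exists2 j, porbit y i = porbit y j &
  #|porbit y j| = k /\ forall q, y q != q -> q \in porbit y j.
Proof.
case/existsP: hy => j /andP[/eqP card_j /forallP fixed].
have moved_in q : y q != q -> q \in porbit y j.
  by apply: contraR => qj; rewrite (eqP (implyP (fixed q) qj)).
by exists j => //; apply/eqP; rewrite eq_porbit_mem moved_in.
Qed.

Lemma kcycle_supportE p : (y p != p) = (p \in porbit y i).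
Proof.
have [j orbit_ij [_ moved_in]] := porbit_kcycle.
rewrite orbit_ij; apply/idP/idP => [/moved_in // | pj].
apply: contra hi => /eqP yp.
rewrite -orbit_ij porbit_sym in pj; case/porbitP: pj => m ->.
by rewrite permX (iter_fix _ yp) yp.
Qed.

Lemma card_porbit_kcycle : #|porbit y i| = k.
Proof. by have [j -> []] := porbit_kcycle. Qed.

End KCycles.

Section ThreeCycles.
Variables (C : numClosedFieldType) (n : nat) (y : 'S_n) (i : 'I_n).
Hypotheses (hy : is_kcycle 3 y) (hi : y i != i).

Lemma kcycle3_iter : y (y (y i)) = i.
Proof. by have := iter_porbit y i; rewrite (card_porbit_kcycle hy hi). Qed.

Lemma support_vec_kcycle3 : support_vec C y = e C i + e C (y i) + e C (y (y i)).
Proof.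
have orbitE p : (y p != p) = (p \in [:: i; y i; y (y i)]).
  by rewrite (kcycle_supportE hy hi) porbit_traject (card_porbit_kcycle hy hi).
have uniq_orbit : uniq [:: i; y i; y (y i)].
  by have := uniq_traject_porbit y i; rewrite (card_porbit_kcycle hy hi).
transitivity (\sum_(q <- [:: i; y i; y (y i)]) e C q).
  by rewrite sum_e_uniq //; apply/rowP => p; rewrite !mxE orbitE.
by rewrite !big_cons big_nil addr0 addrA.
Qed.

End ThreeCycles.

Section Cochains.
Variables (C : numClosedFieldType) (n : nat) (a b : C).
Implicit Types (l m : 'I_n) (h x y : 'S_n) (u v : V C n).

Lemma kC_el x l v : kC a b x (e C l) v = \sum_m v 0 m * kC_basis a b x l m.
Proof.
rewrite /kC -[RHS](sum_e_coordl (fun l' => \sum_m v 0 m * kC_basis a b x l' m)).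
by apply: eq_bigr => l' _; rewrite mulr_sumr; apply: eq_bigr => m _; rewrite mulrA.
Qed.

Lemma kCDl x u u' v : kC a b x (u + u') v = kC a b x u v + kC a b x u' v.
Proof.
rewrite /kC -big_split; apply: eq_bigr => l _; rewrite -big_split.
by apply: eq_bigr => m _; rewrite mxE !mulrDl.
Qed.

Lemma kCDr x u v v' : kC a b x u (v + v') = kC a b x u v + kC a b x u v'.
Proof.
rewrite /kC -big_split; apply: eq_bigr => l _; rewrite -big_split.
by apply: eq_bigr => m _; rewrite mxE mulrDr !mulrDl.
Qed.

Lemma kCZr x u c v : kC a b x u (c *: v) = c * kC a b x u v.
Proof.
rewrite /kC mulr_sumr; apply: eq_bigr => l _; rewrite mulr_sumr.
by apply: eq_bigr => m _; rewrite mxE; ring.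
Qed.

Lemma kC0r x u : kC a b x u 0 = 0.
Proof. by rewrite -(scale0r 0) kCZr mul0r. Qed.

Lemma sum_brk_row (F : 'I_n -> C) h l : \sum_m F m * brk C h l m = F (h^-1 l)%g.
Proof.
rewrite -[RHS](sum_e_coordl F); apply: eq_bigr => m _; rewrite e_coord mulrC /brk.
by rewrite -{1}(permKV h l) (inj_eq perm_inj) eq_sym; case: eqP.
Qed.

Lemma sum_brk_col (F : 'I_n -> C) h l : \sum_m F m * brk C h m l = F (h l).
Proof.
rewrite -[RHS](sum_e_coordl F); apply: eq_bigr => m _.
by rewrite e_coord mulrC /brk; case: eqP.
Qed.

Lemma sum_kC_basis_kcycle5 (F : 'I_n -> C) x l : is_kcycle 5 x ->
  \sum_m F m * kC_basis a b x l m =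
  (a - b) ^+ 2 *
    (F (x^-1 l)%g - F (x l) - 2 * F ((x ^+ 2)^-1 l)%g + 2 * F ((x ^+ 2)%g l)).
Proof.
move=> x5; rewrite -(sum_brk_row F x l) -(sum_brk_col F x l).
rewrite -(sum_brk_row F (x ^+ 2) l) -(sum_brk_col F (x ^+ 2) l).
rewrite !mulr_sumr -!sumrN -!big_split mulr_sumr; apply: eq_bigr => m _.
rewrite /kC_basis x5 /=; change (x * x)%g with (x ^+ 2)%g; ring.
Qed.

Lemma sum_kC_basis x l : \sum_m kC_basis a b x l m = 0.
Proof.
have [x5|not5] := boolP (is_kcycle 5 x); last first.
  by rewrite big1 // => m _; rewrite /kC_basis (negbTE not5).
under eq_bigr do rewrite -[kC_basis _ _ _ _ _]mul1r.
by rewrite (sum_kC_basis_kcycle5 (fun=> 1)) //; ring.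
Qed.

Lemma kC_basis_anti x l m : kC_basis a b x m l = - kC_basis a b x l m.
Proof. by rewrite /kC_basis; case: ifP => _; [ring | rewrite oppr0]. Qed.

Lemma kC_basis_fixl x l m : x l = l -> kC_basis a b x l m = 0.
Proof.
move=> xl; have xxl : (x * x)%g l = l by rewrite permM !xl.
have fixed_eq h : h l = l -> (l == h m) = (m == h l).
  by move=> hl; rewrite -{1}hl (inj_eq perm_inj) hl eq_sym.
rewrite /kC_basis /brk !fixed_eq //.
by case: ifP => _ //; ring.
Qed.

Lemma kC_e_fixed x l v : x l = l -> kC a b x (e C l) v = 0.
Proof. by move=> xl; rewrite kC_el big1 // => m _; rewrite kC_basis_fixl ?mulr0. Qed.

Lemma kC_const_r x u : kC a b x u (const_mx 1) = 0.
Proof.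
rewrite /kC big1 // => l _.
under eq_bigr do rewrite mxE mulr1.
by rewrite -mulr_sumr sum_kC_basis mulr0.
Qed.

Lemma kC_alt x u : kC a b x u u = 0.
Proof.
have anti : kC a b x u u = - kC a b x u u.
  rewrite {1}/kC exchange_big -sumrN; apply: eq_bigr => l _.
  rewrite -sumrN; apply: eq_bigr => m _; rewrite kC_basis_anti; ring.
have /eqP : 2 * kC a b x u u = 0 by rewrite mulr2n mulrDl mul1r {2}anti subrr.
by rewrite mulf_eq0 pnatr_eq0 => /eqP.
Qed.

Lemma kL_e y l m : kL a b y (e C l) (e C m) = kL_basis a b y l m.
Proof.
rewrite /kL -[RHS](sum_e_coordZ (fun l' => kL_basis a b y l' m)).
apply: eq_bigr => l' _; rewrite -(sum_e_coordZ (kL_basis a b y l')) scaler_sumr.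
by apply: eq_bigr => m' _; rewrite scalerA.
Qed.

Lemma kL_basis_fixl y l m : y l = l -> kL_basis a b y l m = 0.
Proof. by move=> yl; rewrite /kL_basis yl eqxx andbF. Qed.

Lemma kL_basis_fixr y l m : y m = m -> kL_basis a b y l m = 0.
Proof. by move=> ym; rewrite /kL_basis ym eqxx andbF. Qed.

Definition kL_row y : V C n := \row_p (if y p != p then a else b).

Lemma kL_basis_next y l :
  is_kcycle 3 y -> y l != l -> kL_basis a b y l (y l) = kL_row y.
Proof. by move=> y3 yl; rewrite /kL_basis y3 yl (inj_eq perm_inj) yl eqxx. Qed.

Lemma kL_rowE y : kL_row y = b *: const_mx 1 + (a - b) *: support_vec C y.
Proof. by apply/rowP => p; rewrite !mxE; case: (y p != p) => /=; ring. Qed.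

Lemma kC_support_kL_row x y : kC a b x (support_vec C y) (kL_row y) = 0.
Proof. by rewrite kL_rowE kCDr !kCZr kC_const_r kC_alt !mulr0 addr0. Qed.

Lemma kC_e_kL_row x y l : is_kcycle 5 x ->
  kC a b x (e C l) (kL_row y) =
  (a - b) ^+ 3 * (delta y (pact x (e C l)) - 2 * delta y (pact (x ^+ 2)%g (e C l))
                  + 2 * delta y (pact (x ^- 2)%g (e C l)) - delta y (pact x^-1%g (e C l))).
Proof.
move=> x5; rewrite kC_el (sum_kC_basis_kcycle5 (fun p => kL_row y 0 p)) //.
rewrite !pact_e !delta_e.
by rewrite !mxE; do 4 case: eqP => _ /=; ring.
Qed.

End Cochains.

Theorem lemma7p6 (C : numClosedFieldType) (n : nat) (hn : (3 <= n)%N)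
  (a b : C) (x y : 'S_n) (hx : is_kcycle 5 x) (hy : is_kcycle 3 y) :
  (forall i j k : 'I_n,
     e C i \in fixed_space y -> e C j \in fixed_space y ->
     phi_xy a b x y (e C i) (e C j) (e C k) = 0) /\
  (forall i j k : 'I_n,
     e C i \in fixed_space y -> e C i \in fixed_space x ->
     phi_xy a b x y (e C i) (e C j) (e C k) = 0) /\
  (forall i j : 'I_n,
     e C i \in fixed_space y -> e C i \notin fixed_space x ->
     e C j \notin fixed_space y ->
     phi_xy a b x y (e C i) (e C j) (pact y (e C j)) =
       2 * (a - b) ^+ 3 *
       (delta y (pact x (e C i)) - 2 * delta y (pact (x ^+ 2)%g (e C i))
        + 2 * delta y (pact (x ^- 2)%g (e C i)) - delta y (pact x^-1%g (e C i)))) /\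
  (forall i : 'I_n,
     e C i \notin fixed_space y ->
     phi_xy a b x y (e C i) (pact y (e C i)) (pact (y ^+ 2)%g (e C i)) = 0).
Proof.
split; [|split; [|split]].
- move=> i j k; rewrite !fixed_space_e => /eqP yi /eqP yj.
  rewrite /phi_xy !pact_e !kL_e (kL_basis_fixl a b _ yj) (kL_basis_fixr a b _ yi).
  by rewrite (kL_basis_fixl a b _ yi) !kC0r !addr0.
- move=> i j k; rewrite !fixed_space_e => /eqP yi /eqP xi.
  rewrite /phi_xy !pact_e !kL_e (kL_basis_fixr a b _ yi) (kL_basis_fixl a b _ yi).
  by rewrite yi kCDl kC_e_fixed // !kC0r !addr0.
- move=> i j; rewrite !fixed_space_e => /eqP yi _ yj.
  rewrite /phi_xy !pact_e !kL_e (kL_basis_fixr a b _ yi) (kL_basis_fixl a b _ yi).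
  by rewrite yi kL_basis_next // kCDl kC_e_kL_row // !kC0r !addr0 !pact_e; ring.
- move=> i; rewrite fixed_space_e => yi.
  have y3i := kcycle3_iter hy yi.
  have yyi : y (y i) != y i by rewrite (inj_eq perm_inj).
  have next3 : kL_basis a b y (y (y i)) i = kL_row a b y.
    by rewrite -{2}y3i kL_basis_next // !(inj_eq perm_inj).
  have := kC_support_kL_row a b x y; rewrite (support_vec_kcycle3 C hy yi) !kCDl => sum0.
  rewrite /phi_xy !pact_e permM !kL_e !kL_basis_next // next3 !kCDl.
  by rewrite y3i -[RHS](mulr0 2) -sum0; ring.
Qed.
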